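(* Let $\lambda\in\mathbb{C}^*$, $\eta\in\mathbb{C}$, $\sigma\in\mathbb{C}[X]$ with $\sigma\ne0$, and let $R$ be an irreducible restricted $\mathcal{G}$-module. Then: (1) $\Omega(\lambda,\eta,\sigma,0)\otimes R$ is an irreducible $\mathcal{G}$-module if and only if $\sigma$ is a nonzero constant; (2) $\Omega(\lambda,\eta,0,\sigma)\otimes R$ is an irreducible $\mathcal{G}$-module if and only if $\sigma$ is a nonzero constant.
   Context: $\mathcal{G}$ is the complex Lie algebra with basis $\{L_n,H_n,I_n,J_n,\mathbf{c}_1,\mathbf{c}_2,\mathbf{c}_3: n\in\mathbb{Z}\}$ whose brackets of basis elements are $[L_m,L_n]=(n-m)L_{m+n}+\frac{m^3-m}{12}\delta_{m+n,0}\mathbf{c}_1$, $[L_m,H_n]=nH_{m+n}+m^2\delta_{m+n,0}\mathbf{c}_2$, $[H_m,H_n]=m\delta_{m+n,0}\mathbf{c}_3$, $[L_m,I_n]=(n-m)I_{m+n}$, $[L_m,J_n]=(n-m)J_{m+n}$, $[H_m,I_n]=I_{m+n}$, $[H_m,J_n]=-J_{m+n}$ (and antisymmetric counterparts), all other brackets of basis elements zero. $\mathcal{G}=\bigoplus_{i\in\mathbb{Z}}\mathcal{G}^i$ is $\mathbb{Z}$-graded with $\mathcal{G}^i$ spanned by $L_i,H_i,I_i,J_i$ (and also $\mathbf{c}_1,\mathbf{c}_2,\mathbf{c}_3$ when $i=0$). A $\mathcal{G}$-module $R$ is restricted if for every $v\in R$ there is $N\in\mathbb{N}$ with $\mathcal{G}^iv=0$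 for all $i>N$. For $\lambda\in\mathbb{C}^*,\eta\in\mathbb{C}$, $0\ne\sigma\in\mathbb{C}[X]$: $\Omega(\lambda,\eta,\sigma,0)$ is $\mathbb{C}[X,Y]$ with $L_mf(X,Y)=\lambda^mf(X,Y-m)(Y-mX+m\eta)$, $H_mf=\lambda^mXf(X,Y-m)$, $I_mf=\lambda^m\sigma(X) f(X-1,Y-m)$, and $J_m,\mathbf{c}_1,\mathbf{c}_2,\mathbf{c}_3$ acting as $0$; $\Omega(\lambda,\eta,0,\sigma)$ is $\mathbb{C}[X,Y]$ with $L_mf=\lambda^mf(X,Y-m)(Y+mX+m\eta)$, $H_mf=\lambda^mXf(X,Y-m)$, $J_mf=\lambda^m\sigma(X)f(X+1,Y-m)$, and $I_m,\mathbf{c}_1,\mathbf{c}_2,\mathbf{c}_3$ acting as $0$ ($m\in\mathbb{Z}$). Tensor products carry the action $x(u\otimes v)=xu\otimes v+u\otimes xv$. *)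

From HB Require Import structures.
From mathcomp Require Import all_boot all_order all_algebra.
From mathcomp Require Import reals Rstruct.
From mathcomp.real_closed Require Import complex.
From mathcomp Require Import mpoly.
Set Implicit Arguments. Unset Strict Implicit. Unset Printing Implicit Defensive.
Import Order.TTheory GRing.Theory Num.Theory.
Local Open Scope ring_scope.

Definition C : closedFieldType := (Rdefinitions.R)[i].

Inductive Gbasis : Type :=
  | bL of int | bH of int | bI of int | bJ of int | bc1 | bc2 | bc3.

Definition dlt (k : int) : C := if k == 0 then 1 else 0.

(* The bracket [x, y] of two basis elements, as a finite linear
   combination (list of (coefficient, basis element)) of basis elements. *)
Definition bracket (x y : Gbasis) : seq (C * Gbasis) :=
  match x, y with
  | bL m, bL n => [:: ((n - m)%:~R, bL (m + n));
                      (dlt (m + n) * ((m ^+ 3 - m)%:~R / 12%:R), bc1)]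
  | bL m, bH n => [:: (n%:~R, bH (m + n)); (dlt (m + n) * (m ^+ 2)%:~R, bc2)]
  | bH m, bL n => [:: (- m%:~R, bH (m + n)); (- (dlt (m + n) * (n ^+ 2)%:~R), bc2)]
  | bH m, bH n => [:: (dlt (m + n) * m%:~R, bc3)]
  | bL m, bI n => [:: ((n - m)%:~R, bI (m + n))]
  | bI m, bL n => [:: (- (m - n)%:~R, bI (m + n))]
  | bL m, bJ n => [:: ((n - m)%:~R, bJ (m + n))]
  | bJ m, bL n => [:: (- (m - n)%:~R, bJ (m + n))]
  | bH m, bI n => [:: (1, bI (m + n))]
  | bI m, bH n => [:: (-1, bI (m + n))]
  | bH m, bJ n => [:: (-1, bJ (m + n))]
  | bJ m, bH n => [:: (1, bJ (m + n))]
  | _, _ => [::]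
  end.

Definition in_deg (i : int) (x : Gbasis) : bool :=
  match x with
  | bL n | bH n | bI n | bJ n => n == i
  | bc1 | bc2 | bc3 => i == 0
  end.

(* A G-module structure on the complex vector space V, given by the
   (linear) action of the basis elements; the Lie algebra action is the
   linear extension, and it is a representation iff the bracket relations
   hold on basis elements. *)
Definition is_Gmodule (V : lmodType C) (act : Gbasis -> V -> V) : Prop :=
  (forall x (a : C) (u v : V), act x (a *: u + v) = a *: act x u + act x v) /\
  (forall x y (v : V),
      act x (act y v) - act y (act x v) =
      \sum_(p <- bracket x y) p.1 *: act p.2 v).

Definition restricted (V : lmodType C) (act : Gbasis -> V -> V) : Prop :=
  forall v : V, exists N : nat,
    forall (i : int) (x : Gbasis), (N%:Z < i) -> in_deg i x -> act x v = 0.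

Definition is_submodule (V : lmodType C) (act : Gbasis -> V -> V)
    (W : V -> Prop) : Prop :=
  W 0 /\ (forall (a : C) u v, W u -> W v -> W (a *: u + v)) /\
  (forall x u, W u -> W (act x u)).

Definition irreducible (V : lmodType C) (act : Gbasis -> V -> V) : Prop :=
  (exists v : V, v != 0) /\
  forall W : V -> Prop, is_submodule act W ->
    (forall v, W v -> v = 0) \/ (forall v, W v).

Definition bilinear (U V W : lmodType C) (b : U -> V -> W) : Prop :=
  (forall (a : C) u1 u2 v, b (a *: u1 + u2) v = a *: b u1 v + b u2 v) /\
  (forall (a : C) u v1 v2, b u (a *: v1 + v2) = a *: b u v1 + b u v2).

Definition linear_map (V W : lmodType C) (g : V -> W) : Prop :=
  forall (a : C) u v, g (a *: u + v) = a *: g u + g v.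

Definition is_tensor (U V T : lmodType C) (t : U -> V -> T) : Prop :=
  bilinear t /\
  forall (W : lmodType C) (b : U -> V -> W), bilinear b ->
    exists g : T -> W,
      [/\ linear_map g, (forall u v, g (t u v) = b u v) &
          (forall g' : T -> W, linear_map g' ->
             (forall u v, g' (t u v) = b u v) -> forall z, g' z = g z)].

Definition CXY : lmodType C := {mpoly C[2]}.
Definition Xv : {mpoly C[2]} := 'X_(@ord0 1).
Definition Yv : {mpoly C[2]} := 'X_(@ord_max 1).

Definition polyX (s : {poly C}) : {mpoly C[2]} :=
  \sum_(k < size s) (s`_k)%:MP * Xv ^+ k.

Definition shiftXY (a b : C) (f : {mpoly C[2]}) : {mpoly C[2]} :=
  f \mPo [tuple Xv + a%:MP; Yv + b%:MP].

(* The module Omega(lambda, eta, sigma, 0). *)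
Definition OmegaI (lam eta : C) (s : {poly C}) (x : Gbasis)
    (f : {mpoly C[2]}) : {mpoly C[2]} :=
  match x with
  | bL m => (lam ^ m) *: (shiftXY 0 (- m%:~R) f *
                          (Yv - (m%:~R)%:MP * Xv + (m%:~R * eta)%:MP))
  | bH m => (lam ^ m) *: (Xv * shiftXY 0 (- m%:~R) f)
  | bI m => (lam ^ m) *: (polyX s * shiftXY (-1) (- m%:~R) f)
  | _ => 0
  end.

(* The module Omega(lambda, eta, 0, sigma). *)
Definition OmegaJ (lam eta : C) (s : {poly C}) (x : Gbasis)
    (f : {mpoly C[2]}) : {mpoly C[2]} :=
  match x with
  | bL m => (lam ^ m) *: (shiftXY 0 (- m%:~R) f *
                          (Yv + (m%:~R)%:MP * Xv + (m%:~R * eta)%:MP))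
  | bH m => (lam ^ m) *: (Xv * shiftXY 0 (- m%:~R) f)
  | bJ m => (lam ^ m) *: (polyX s * shiftXY 1 (- m%:~R) f)
  | _ => 0
  end.

Definition tensor_action (V T : lmodType C)
    (omega : Gbasis -> CXY -> CXY) (rho : Gbasis -> V -> V)
    (t : CXY -> V -> T) (act : Gbasis -> T -> T) : Prop :=
  forall x u v, act x (t u v) = t (omega x u) v + t u (rho x v).

Definition nonzero_constant (s : {poly C}) : Prop :=
  exists c : C, c != 0 /\ s = c%:P.

From Pilot Require Import Defs.
From HB Require Import structures.
From mathcomp Require Import all_boot all_order all_algebra.
From mathcomp Require Import reals Rstruct.
From mathcomp.real_closed Require Import complex.
From mathcomp Require Import mpoly.
From mathcomp Require Import boolp ring zify.
Set Implicit Arguments. Unset Strict Implicit. Unset Printing Implicit Defensive.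
Import Order.TTheory GRing.Theory Num.Theory.
Local Open Scope ring_scope.

(* If sigma has a root a, the tensors whose first factors vanish on the line
   X = a form a submodule, since every generator of G maps such polynomials to
   such polynomials; it contains (X - a) (x) v but not 1 (x) v, so the tensor
   product is reducible.
   If sigma = c is a nonzero constant, take a nonzero submodule W and w in W.
   For m large the actions of I_m (resp. J_m) on w only touch the polynomial
   factors, where they are the shifts f(X, Y) |-> f(X -+ 1, Y - m).  Products
   of differences of two such shifts are finite-difference operators, and one
   of them kills every monomial of w except the lexicographically largest
   one, which it sends to a nonzero constant: so 1 (x) v lies in W for some
   v <> 0.  From 1 (x) v the operators H_m (multiplication by X) and L_m
   (essentially multiplication by Y) generate every f (x) v, so the vectors u
   with C[X,Y] (x) u inside W form a nonzero submodule of R, which is all of R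
   by irreducibility; hence W is everything. *)

Section LinearMap.
Variables (A B : lmodType C) (g : A -> B).
Hypothesis g_lin : linear_map g.

Definition linear_of : {linear A -> B} :=
  HB.pack g (GRing.isLinear.Build C A B *:%R g g_lin).

Lemma linear_map0 : g 0 = 0. Proof. exact: raddf0 linear_of. Qed.
Lemma linear_mapB u v : g (u - v) = g u - g v. Proof. exact: (raddfB linear_of u v). Qed.
Lemma linear_mapZ a u : g (a *: u) = a *: g u. Proof. exact: (linearZ_LR linear_of a u). Qed.
Lemma linear_map_sum (I : Type) (r : seq I) (F : I -> A) :
  g (\sum_(i <- r) F i) = \sum_(i <- r) g (F i).
Proof. exact: (raddf_sum linear_of r xpredT F). Qed.
End LinearMap.

Section Bilinear.
Variables (U V W : lmodType C) (b : U -> V -> W).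
Hypothesis b_bil : Defs.bilinear b.

Lemma bilinear_linl v : linear_map (b^~ v).
Proof. by move=> a u1 u2; apply: (proj1 b_bil). Qed.
Lemma bilinear_linr u : linear_map (b u).
Proof. by move=> a v1 v2; apply: (proj2 b_bil). Qed.

Lemma bilinear0l v : b 0 v = 0. Proof. exact: linear_map0 (bilinear_linl v). Qed.
Lemma bilinear0r u : b u 0 = 0. Proof. exact: linear_map0 (bilinear_linr u). Qed.
Lemma bilinearBl u1 u2 v : b (u1 - u2) v = b u1 v - b u2 v.
Proof. exact: (linear_mapB (bilinear_linl v) u1 u2). Qed.
Lemma bilinearZl a u v : b (a *: u) v = a *: b u v.
Proof. exact: (linear_mapZ (bilinear_linl v) a u). Qed.
Lemma bilinearZr a u v : b u (a *: v) = a *: b u v.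
Proof. exact: (linear_mapZ (bilinear_linr u) a v). Qed.
Lemma bilinear_suml (I : Type) (r : seq I) (F : I -> U) v :
  b (\sum_(i <- r) F i) v = \sum_(i <- r) b (F i) v.
Proof. exact: (linear_map_sum (bilinear_linl v) r F). Qed.
Lemma bilinear_sumr (I : Type) (r : seq I) (F : I -> V) u :
  b u (\sum_(i <- r) F i) = \sum_(i <- r) b u (F i).
Proof. exact: (linear_map_sum (bilinear_linr u) r F). Qed.
End Bilinear.

Section Subspace.
Variables (A : lmodType C) (S : A -> Prop).
Hypotheses (S0 : S 0) (S_lin : forall a u v, S u -> S v -> S (a *: u + v)).

Lemma subspaceD u v : S u -> S v -> S (u + v).
Proof. by move=> Su Sv; have := S_lin 1 Su Sv; rewrite scale1r. Qed.
Lemma subspaceZ a u : S u -> S (a *: u).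
Proof. by move=> Su; have := S_lin a Su S0; rewrite addr0. Qed.
Lemma subspaceB u v : S u -> S v -> S (u - v).
Proof. by move=> Su Sv; have := S_lin (-1) Sv Su; rewrite scaleN1r addrC. Qed.
Lemma subspace_sum (I : Type) (r : seq I) (P : pred I) (F : I -> A) :
  (forall i, P i -> S (F i)) -> S (\sum_(i <- r | P i) F i).
Proof.
by move=> SF; elim/big_rec: _ => // i x Pi Sx; apply: subspaceD => //; apply: SF.
Qed.
End Subspace.

Record subspace (A : lmodType C) := Subspace {
  subspace_mem :> A -> Prop;
  subspace0 : subspace_mem 0;
  subspace_lin : forall a u v,
    subspace_mem u -> subspace_mem v -> subspace_mem (a *: u + v)
}.

Section QuotientModule.
Variables (A : lmodType C) (S : subspace A).

Definition subspace_pred : {pred A} := fun z => `[< S z >].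

Fact subspace_pred_zmod_closed : zmod_closed subspace_pred.
Proof.
split=> [|u v /asboolP Su /asboolP Sv]; apply/asboolP; first exact: subspace0.
exact: (subspaceB (@subspace_lin _ S)).
Qed.
HB.instance Definition _ :=
  GRing.isZmodClosed.Build A subspace_pred subspace_pred_zmod_closed.

Local Notation Q := (Quotient.quot subspace_pred).
Local Open Scope quotient_scope.

Definition quot_scale (a : C) : Q -> Q := lift_op1 Q ( *:%R a).

Lemma pi_scale a : {morph \pi_Q : u / a *: u >-> quot_scale a u}.
Proof.
move=> u; unlock quot_scale; apply/eqP; rewrite piE Quotient.equivE -scalerBr.
have /asboolP Su : u - repr (\pi_Q u) \in subspace_pred.
  by rewrite Quotient.idealrBE reprK.
exact/asboolP/(subspaceZ (subspace0 S) (@subspace_lin _ S)).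
Qed.
Canonical pi_scale_morph a := PiMorph1 (pi_scale a).

Fact quot_scaleA a b u : quot_scale a (quot_scale b u) = quot_scale (a * b) u.
Proof. by rewrite -[u]reprK !piE scalerA. Qed.
Fact quot_scale1 : left_id 1 quot_scale.
Proof. by move=> u; rewrite -[u]reprK !piE scale1r. Qed.
Fact quot_scaleDr : right_distributive quot_scale +%R.
Proof. by move=> a u v; rewrite -[u]reprK -[v]reprK !piE scalerDr. Qed.
Fact quot_scaleDl u : {morph quot_scale^~ u : a b / a + b}.
Proof. by move=> a b; rewrite -[u]reprK !piE scalerDl. Qed.
HB.instance Definition _ := GRing.Zmodule_isLmodule.Build C Q
  quot_scaleA quot_scale1 quot_scaleDr quot_scaleDl.

Lemma quot_pi_linear : linear_map (\pi_Q : A -> Q).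
Proof. by move=> a u v; rewrite !piE. Qed.

Lemma quot_pi_eq0 u : \pi_Q u = 0 :> Q <-> S u.
Proof.
have -> : 0 = \pi_Q 0 :> Q by rewrite piE.
by rewrite (rwP eqP) -Quotient.idealrBE subr0; split=> /asboolP.
Qed.
End QuotientModule.

Section TensorProduct.
Variables (U V T : lmodType C) (t : U -> V -> T).
Hypothesis t_tensor : is_tensor t.
Let t_bil : Defs.bilinear t := proj1 t_tensor.

Definition pure_span (z : T) := exists l : seq (U * V), z = \sum_(p <- l) t p.1 p.2.

Fact pure_span0 : pure_span 0. Proof. by exists [::]; rewrite big_nil. Qed.

Fact pure_span_lin a y z : pure_span y -> pure_span z -> pure_span (a *: y + z).
Proof.
move=> [l1 ->] [l2 ->]; exists ([seq (a *: p.1, p.2) | p <- l1] ++ l2).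
rewrite big_cat big_map scaler_sumr; congr (_ + _).
by apply: eq_bigr => p _; rewrite (bilinearZl t_bil).
Qed.

(* By uniqueness in the universal property: the projection onto T / pure_span and
   the zero map agree on pure tensors. *)
Lemma tensor_pure_span z : pure_span z.
Proof.
pose S := Subspace pure_span0 pure_span_lin.
pose Q := Quotient.quot (subspace_pred S).
have zero_bil : Defs.bilinear (fun (_ : U) (_ : V) => 0 : Q).
  by split=> *; rewrite scaler0 addr0.
have [g [_ _ g_uniq]] := (proj2 t_tensor) Q _ zero_bil.
have zero_lin : linear_map (fun _ : T => 0 : Q) by move=> *; rewrite scaler0 addr0.
apply/(quot_pi_eq0 S); rewrite [LHS](g_uniq _ (quot_pi_linear S)).
  by rewrite -(g_uniq _ zero_lin).
by move=> u v; apply/(quot_pi_eq0 S); exists [:: (u, v)]; rewrite big_seq1.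
Qed.

Lemma tensor_contract (phi : {linear U -> C^o}) :
  exists g : T -> V, linear_map g /\ forall u v, g (t u v) = phi u *: v.
Proof.
have phi_bil : Defs.bilinear (fun u (v : V) => phi u *: v).
  split=> a u1 u2 v; first by rewrite linearP scalerDl scalerA.
  by rewrite scalerDr !scalerA mulrC.
by have [g [g_lin gt _]] := (proj2 t_tensor) V _ phi_bil; exists g.
Qed.

Lemma tensor_neq0 (phi : {linear U -> C^o}) u v :
  phi u = 1 -> v != 0 -> t u v != 0.
Proof.
move=> phi_u v_neq0; have [g [g_lin gt]] := tensor_contract phi.
apply: contraNneq v_neq0 => tuv0.
by rewrite -[v]scale1r -phi_u -gt tuv0 (linear_map0 g_lin).
Qed.
End TensorProduct.

Lemma coef_XaddC_exp (k : C) i j : (('X + k%:P) ^+ i)`_j = k ^+ (i - j) *+ 'C(i, j).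
Proof.
elim: i j => [|i IH] j; first by rewrite expr0 coefC bin0n; case: j.
rewrite exprSr mulrDr coefD coefMX coefMC.
case: j => [|j] /=; first by rewrite add0r IH !subn0 !bin0 !mulr1n exprSr.
rewrite !IH subSS binS mulrnDr [RHS]addrC; congr (_ + _).
have [lt_ji|le_ij] := ltnP j i; first by rewrite mulrnAl -exprSr subnSK.
by rewrite bin_small ?ltnS // !mulr0n mul0r.
Qed.

Lemma size_comp_XaddC (k : C) (q : {poly C}) : size (q \Po ('X + k%:P)) = size q.
Proof. by rewrite size_comp_poly2 // size_XaddC. Qed.

Lemma coef_comp_XaddC (k : C) (q : {poly C}) n j : (size q <= n)%N ->
  (q \Po ('X + k%:P))`_j = \sum_(l < n) q`_l * (k ^+ (l - j) *+ 'C(l, j)).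
Proof.
move=> le_qn; rewrite coef_comp_poly.
rewrite (big_ord_widen n (fun l => q`_l * (('X + k%:P) ^+ l)`_j) le_qn).
rewrite big_mkcond /=; apply: eq_bigr => l _; rewrite coef_XaddC_exp.
by case: ltnP => // le_ql; rewrite nth_default // mul0r.
Qed.

Lemma comp_XaddC_iter n (k : C) (q : {poly C}) :
  iter n (fun p => p \Po ('X + k%:P)) q = q \Po ('X + (k *+ n)%:P).
Proof.
elim: n => [|n /= ->]; first by rewrite addr0 comp_polyXr.
by rewrite -comp_polyA comp_polyD comp_polyX comp_polyC -addrA -polyCD mulrS addrC.
Qed.

Lemma coef_comp_XaddC_Xn (k : C) i j : (i <= j)%N ->
  ('X^i \Po ('X + k%:P))`_j = (j == i)%:R.
Proof.
move=> le_ij; have size_i := size_comp_XaddC k 'X^i; rewrite size_polyXn in size_i.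
have [->|ne_ji] := eqVneq j i.
  by rewrite -[X in _`_X]succnK -size_i -lead_coefE lead_coef_comp ?size_XaddC //
    lead_coefXaddC lead_coefXn expr1n mulr1.
by rewrite nth_default // size_i ltn_neqAle eq_sym ne_ji.
Qed.

Section ShiftDifference.
Variables (a b : C).

Definition shift_diff (q : {poly C}) :=
  (q \Po ('X + a%:P)) - (q \Po ('X + b%:P)).

Lemma size_shift_diff (q : {poly C}) n :
  (size q <= n.+1)%N -> (size (shift_diff q) <= n)%N.
Proof.
move=> le_qn; apply/leq_sizeP => j le_nj.
rewrite coefB !(coef_comp_XaddC _ _ le_qn) -sumrB big1 // => l _.
have /eqP -> : (l - j == 0)%N by rewrite subn_eq0 (leq_trans _ le_nj) // -ltnS.
by rewrite subrr.
Qed.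

Lemma coef_shift_diff (q : {poly C}) n : (size q <= n.+2)%N ->
  (shift_diff q)`_n = (n.+1)%:R * (a - b) * q`_n.+1.
Proof.
move=> le_qn; rewrite coefB !(coef_comp_XaddC _ _ le_qn) -sumrB.
rewrite 2!big_ord_recr big1 /= ?add0r => [|l _]; last first.
  by rewrite bin_small ?mulr0n ?subrr.
by rewrite subnn subSn // subnn binn binSn !expr0 !expr1 subrr add0r; ring.
Qed.

Lemma iter_shift_diff B (q : {poly C}) : (size q <= B.+1)%N ->
  iter B shift_diff q = ((B`!)%:R * (a - b) ^+ B * q`_B)%:P.
Proof.
elim: B q => [|B IH] q le_qB; first by rewrite /= mul1r mul1r -size1_polyC.
rewrite iterSr IH ?size_shift_diff // coef_shift_diff // factS natrM exprSr.
by congr (_%:P); ring.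
Qed.
End ShiftDifference.

Definition mpolyC_comm (x : {mpoly C[2]}) : commr_rmorph (@mpolyC 2 C) x :=
  fun y => mulrC _ _.
Definition subst_poly (x : {mpoly C[2]}) : {rmorphism {poly C} -> {mpoly C[2]}} :=
  horner_morph (mpolyC_comm x).

Lemma subst_polyC x c : subst_poly x c%:P = c%:MP. Proof. exact: horner_morphC. Qed.
Lemma subst_polyX x : subst_poly x 'X = x. Proof. exact: horner_morphX. Qed.
Lemma subst_polyZ x c p : subst_poly x (c *: p) = c *: subst_poly x p.
Proof. by rewrite -mul_polyC rmorphM subst_polyC mul_mpolyC. Qed.

Definition pXY (p q : {poly C}) : {mpoly C[2]} := subst_poly Xv p * subst_poly Yv q.

Lemma mpolyX_pXY (m : 'X_{1..2}) : 'X_[m] = pXY 'X^(m ord0) 'X^(m ord_max).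
Proof.
rewrite mpolyXE_id big_ord_recl big_ord1 /pXY !rmorphXn !subst_polyX /Xv /Yv.
by congr (_ * 'X_ _ ^+ m _); apply: val_inj.
Qed.

Lemma bmultinom_lt D (m : 'X_{1..2 < D}) i : (m i < D)%N.
Proof. by apply: leq_ltn_trans (bmdeg m); rewrite mdegE (bigD1 i) //= leq_addr. Qed.

Lemma multinom2_eq (m m' : 'X_{1..2}) :
  m ord0 = m' ord0 -> m ord_max = m' ord_max -> m = m'.
Proof.
move=> eq0 eq1; apply/mnmP => -[[|[|//]] i2].
  by rewrite (_ : Ordinal i2 = ord0) //; apply: val_inj.
by rewrite (_ : Ordinal i2 = ord_max) //; apply: val_inj.
Qed.

Lemma shiftXY_Xv a b : shiftXY a b Xv = Xv + a%:MP.
Proof. by rewrite /shiftXY /Xv comp_mpolyXU. Qed.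
Lemma shiftXY_Yv a b : shiftXY a b Yv = Yv + b%:MP.
Proof. by rewrite /shiftXY /Yv comp_mpolyXU. Qed.

Lemma shiftXY_subst_poly a b x p :
  shiftXY a b (subst_poly x p) = subst_poly (shiftXY a b x) p.
Proof.
rewrite /= /horner_morph /shiftXY -horner_map -map_poly_comp; congr (_.[_]).
by apply: eq_map_poly => y; apply: comp_mpolyC.
Qed.

Lemma subst_poly_addC x c p :
  subst_poly (x + c%:MP) p = subst_poly x (p \Po ('X + c%:P)).
Proof.
rewrite /= /horner_morph map_comp_poly horner_comp map_polyXaddC.
by rewrite hornerD hornerX hornerC.
Qed.

Lemma shiftXY_pXY a b p q :
  shiftXY a b (pXY p q) = pXY (p \Po ('X + a%:P)) (q \Po ('X + b%:P)).
Proof.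
by rewrite /pXY {1}/shiftXY rmorphM /= -!/(shiftXY _ _ _) !shiftXY_subst_poly
  shiftXY_Xv shiftXY_Yv !subst_poly_addC.
Qed.

Lemma pXY_linl q : linear_map (pXY^~ q).
Proof. by move=> a p1 p2; rewrite /pXY rmorphD subst_polyZ mulrDl scalerAl. Qed.
Lemma pXY_linr p : linear_map (pXY p).
Proof. by move=> a q1 q2; rewrite /pXY rmorphD subst_polyZ mulrDr scalerAr. Qed.

Section SubspaceGeneration.
Variables (A : {mpoly C[2]} -> Prop) (k c d : C).
Hypotheses (A0 : A 0) (A_lin : forall a f g, A f -> A g -> A (a *: f + g)).
Hypotheses (A1 : A 1) (A_X : forall f, A f -> A (Xv * shiftXY 0 k f))
  (A_Y : forall f, A f -> A (shiftXY 0 k f * (Yv + c%:MP * Xv + d%:MP))).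

Lemma subspace_subst_polyX p : A (subst_poly Xv p).
Proof.
elim/poly_ind: p => [|p a Ap]; first by rewrite rmorph0.
rewrite rmorphD rmorphM /= subst_polyX subst_polyC mulrC -[a%:MP]mulr1 mul_mpolyC.
apply: (subspaceD A_lin); last exact: (subspaceZ A0 A_lin).
by have := A_X Ap; rewrite shiftXY_subst_poly shiftXY_Xv mpolyC0 addr0.
Qed.

Lemma subspace_pXY b (p q : {poly C}) : (size q <= b.+1)%N -> A (pXY p q).
Proof.
elim: b p q => [|b IH] p q le_qb.
  rewrite (size1_polyC le_qb) -[_%:P]mulr1 mul_polyC (linear_mapZ (pXY_linr p)).
  by apply: (subspaceZ A0 A_lin); rewrite /pXY rmorph1 mulr1; apply: subspace_subst_polyX.
have A_top p' : A (pXY p' 'X^(b.+1)).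
  pose r := 'X^b \Po ('X + k%:P).
  have size_r : size r = b.+1 by rewrite size_comp_XaddC size_polyXn.
  have Y_step : pXY p' r * (Yv + c%:MP * Xv + d%:MP) =
      pXY p' (r * 'X) + pXY (p' * (c%:P * 'X + d%:P)) r.
    by rewrite /pXY !rmorphM /= !rmorphD !rmorphM /= !subst_polyX !subst_polyC; ring.
  have A_rX : A (pXY p' (r * 'X)).
    have := A_Y (IH p' 'X^b _); rewrite size_polyXn leqnn => /(_ isT).
    rewrite shiftXY_pXY polyC0 addr0 comp_polyXr -/r Y_step => A_sum.
    by rewrite -(addrK (pXY (p' * (c%:P * 'X + d%:P)) r) (pXY _ _));
      apply: (subspaceB A_lin) A_sum (IH _ _ _); rewrite size_r.
  have A_dX : A (pXY p' ((r - 'X^b) * 'X)).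
    apply: IH; apply: leq_trans (size_polyMleq _ _) _; rewrite size_polyX addn2 ltnS.
    have := @size_shift_diff k 0 'X^b b; rewrite size_polyXn leqnn.
    by rewrite /shift_diff polyC0 addr0 comp_polyXr => /(_ isT).
  have -> : 'X^(b.+1) = r * 'X - (r - 'X^b) * 'X by rewrite exprSr; ring.
  by rewrite (linear_mapB (pXY_linr p')); apply: (subspaceB A_lin).
have le_q' : (size (q - q`_b.+1 *: 'X^(b.+1))%R <= b.+1)%N.
  apply/leq_sizeP => j le_bj; rewrite coefB coefZ coefXn.
  have [->|ne_jb] := eqVneq j b.+1; first by rewrite mulr1 subrr.
  by rewrite mulr0 subr0 nth_default // (leq_trans le_qb) // ltn_neqAle eq_sym ne_jb.
have -> : q = q`_b.+1 *: 'X^(b.+1) + (q - q`_b.+1 *: 'X^(b.+1)) by rewrite addrC subrK.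
by rewrite pXY_linr; apply: A_lin (A_top p) (IH _ _ le_q').
Qed.

Lemma subspace_mpoly_full f : A f.
Proof.
rewrite (mpolyE f); apply: (subspace_sum A0 A_lin) => m _.
apply: (subspaceZ A0 A_lin); rewrite mpolyX_pXY.
by apply: subspace_pXY; rewrite size_polyXn.
Qed.
End SubspaceGeneration.

Section DifferenceOperator.
Variables (e k1 k2 : C).

Definition diff_op (A B : nat) (f : {mpoly C[2]}) : {mpoly C[2]} :=
  iter A (fun g => shiftXY e k1 g - g)
    (iter B (fun g => shiftXY e k2 g - shiftXY e k1 g) f).

Lemma diff_op_pXY A B p (q : {poly C}) : (size q <= B.+1)%N ->
  diff_op A B (pXY p q) =
  pXY (iter A (shift_diff e 0) (p \Po ('X + (e *+ B)%:P)))
      ((B`!)%:R * (k2 - k1) ^+ B * q`_B)%:P.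
Proof.
move=> le_qB; rewrite /diff_op -comp_XaddC_iter.
have -> : forall n, iter n (fun g => shiftXY e k2 g - shiftXY e k1 g) (pXY p q) =
    pXY (iter n (fun p => p \Po ('X + e%:P)) p) (iter n (shift_diff k2 k1) q).
  elim=> //= n ->.
  by rewrite !shiftXY_pXY -(linear_mapB (pXY_linr _)).
rewrite iter_shift_diff //; move: (_ * _ * _) => c.
elim: A => //= A ->.
rewrite shiftXY_pXY comp_polyC -(linear_mapB (pXY_linl _)); congr (pXY _ _).
by rewrite /shift_diff polyC0 addr0 comp_polyXr.
Qed.

Lemma diff_op_lt A B a b : (b < B)%N -> diff_op A B (pXY 'X^a 'X^b) = 0.
Proof.
move=> lt_bB; rewrite diff_op_pXY; last by rewrite size_polyXn ltnW.
by rewrite coefXn gtn_eqF // mulr0 polyC0 (linear_map0 (pXY_linr _)).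
Qed.

Lemma diff_op_Xn A B a : (a <= A)%N ->
  diff_op A B (pXY 'X^a 'X^B) =
  ((a == A)%:R * (A`! * B`!)%:R * e ^+ A * (k2 - k1) ^+ B)%:MP.
Proof.
move=> le_aA; rewrite diff_op_pXY ?size_polyXn // coefXn eqxx mulr1.
rewrite iter_shift_diff ?size_comp_XaddC ?size_polyXn // coef_comp_XaddC_Xn //.
rewrite /pXY !subst_polyC -mpolyCM subr0 eq_sym natrM; congr (_%:MP); ring.
Qed.
End DifferenceOperator.

Lemma tensor_monomial_expansion (V T : lmodType C) (t : CXY -> V -> T) :
  is_tensor t -> forall w : T, exists D (u : 'X_{1..2 < D} -> V),
    w = \sum_(m : 'X_{1..2 < D}) t 'X_[m] (u m).
Proof.
move=> t_tensor w; have t_bil := proj1 t_tensor.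
have [l ->] := tensor_pure_span t_tensor w.
pose D := (\sum_(p <- l) msize p.1)%N.
exists D, (fun m => \sum_(p <- l) p.1@_m *: p.2).
under [RHS]eq_bigr do rewrite (bilinear_sumr t_bil).
rewrite exchange_big /= big_seq [RHS]big_seq; apply: eq_bigr => p l_p.
rewrite {1}(@mpolywE _ _ D p.1); last by rewrite /D (big_rem p l_p) leq_addr.
rewrite (bilinear_suml t_bil); apply: eq_bigr => m _.
by rewrite (bilinearZl t_bil) (bilinearZr t_bil).
Qed.

Section Restricted.
Variables (V : lmodType C) (rho : Gbasis -> V -> V).

Definition killed_above (N : nat) (v : V) :=
  forall (i : int) (x : Gbasis), N%:Z < i -> in_deg i x -> rho x v = 0.

Lemma killed_above_mono N M v : (N <= M)%N -> killed_above N v -> killed_above M v.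
Proof. by move=> le_NM kv i x lt_Mi; apply: kv; rewrite (le_lt_trans _ lt_Mi) ?lez_nat. Qed.

Lemma restricted_killed_seq (s : seq V) :
  restricted rho -> exists N, {in s, forall v, killed_above N v}.
Proof.
move=> rho_restr; elim: s => [|v s [N kN]]; first by exists 0%N.
have [Nv kv] := rho_restr v; exists (maxn N Nv) => u; rewrite inE => /predU1P[->|s_u].
  exact: killed_above_mono (leq_maxr _ _) kv.
exact: killed_above_mono (leq_maxl _ _) (kN u s_u).
Qed.
End Restricted.

Definition point (a y : C) : 'I_2 -> C := fun i => if i == ord0 then a else y.

Definition vanishes_on_line (a : C) (f : {mpoly C[2]}) := forall y, f.@[point a y] = 0.

Section TensorModule.
Variables (V T : lmodType C) (rho : Gbasis -> V -> V) (omega : Gbasis -> CXY -> CXY).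
Variables (t : CXY -> V -> T) (act : Gbasis -> T -> T).
Hypotheses (t_tensor : is_tensor t) (act_mod : is_Gmodule act)
  (act_tensor : tensor_action omega rho t act).
Let t_bil : Defs.bilinear t := proj1 t_tensor.

Lemma act_pure_killed N v f x (m : int) :
  killed_above rho N v -> N%:Z < m -> in_deg m x -> act x (t f v) = t (omega x f) v.
Proof. by move=> kv lt_Nm xm; rewrite act_tensor (kv m x) // (bilinear0r t_bil) addr0. Qed.

Section Irreducibility.
Variables (lam c e : C) (K : int -> Gbasis) (cL dL : int -> C).
Hypotheses (lam_neq0 : lam != 0) (c_neq0 : c != 0) (e_neq0 : e != 0).
Hypotheses (K_deg : forall m, in_deg m (K m))
  (omega_K : forall m f, omega (K m) f = lam ^ m *: (c%:MP * shiftXY e (- m%:~R) f))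
  (omega_H : forall m f, omega (bH m) f = lam ^ m *: (Xv * shiftXY 0 (- m%:~R) f))
  (omega_L : forall m f, omega (bL m) f =
     lam ^ m *: (shiftXY 0 (- m%:~R) f * (Yv + (cL m)%:MP * Xv + (dL m)%:MP))).
Hypotheses (rho_restr : restricted rho) (rho_irr : irreducible rho).

Section Submodule.
Variable W : T -> Prop.
Hypothesis W_sub : is_submodule act W.
Let W0 : W 0 := proj1 W_sub.
Let W_lin : forall a u v, W u -> W v -> W (a *: u + v) := proj1 (proj2 W_sub).
Let W_act : forall x u, W u -> W (act x u) := proj2 (proj2 W_sub).

(* phi (x) id preserves W on tensors whose V-factors are killed above degree N;
   for m > N, the generators of degree m act in this way. *)
Definition closed_op N (phi : CXY -> CXY) := forall (I : Type) (r : seq I)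
  (F : I -> CXY) (G : I -> V), (forall i, killed_above rho N (G i)) ->
  W (\sum_(i <- r) t (F i) (G i)) -> W (\sum_(i <- r) t (phi (F i)) (G i)).

Lemma closed_op_pure N phi f v :
  closed_op N phi -> killed_above rho N v -> W (t f v) -> W (t (phi f) v).
Proof.
move=> phiW kv; have := phiW unit [:: tt] (fun _ => f) (fun _ => v) (fun _ => kv).
by rewrite !big_seq1.
Qed.

Lemma closed_op_comp N phi psi :
  closed_op N phi -> closed_op N psi -> closed_op N (phi \o psi).
Proof. by move=> phiW psiW I r F G kG /(psiW I r F G kG); apply: phiW. Qed.

Lemma closed_op_sub N phi psi :
  closed_op N phi -> closed_op N psi -> closed_op N (fun f => phi f - psi f).
Proof.
move=> phiW psiW I r F G kG Wsum.
under eq_bigr do rewrite (bilinearBl t_bil).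
by rewrite sumrB; apply: (subspaceB W_lin); [apply: phiW | apply: psiW].
Qed.

Lemma closed_op_iter N phi n : closed_op N phi -> closed_op N (iter n phi).
Proof. by move=> phiW; elim: n => [//|n IH]; apply: closed_op_comp. Qed.

Lemma closed_op_action N x (m : int) (a : C) phi :
  N%:Z < m -> in_deg m x -> a != 0 -> (forall f, omega x f = a *: phi f) ->
  closed_op N phi.
Proof.
move=> lt_Nm xm a_neq0 omega_x I r F G kG /(W_act x).
rewrite (linear_map_sum (proj1 act_mod x)).
under eq_bigr do
  rewrite (@act_pure_killed N _ _ x m (kG _) lt_Nm xm) omega_x (bilinearZl t_bil).
by rewrite -scaler_sumr => /(subspaceZ W0 W_lin a^-1); rewrite scalerA mulVf // scale1r.
Qed.

Lemma closed_op_shift N m : (N < m)%N -> closed_op N (shiftXY e (- m%:R)).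
Proof.
move=> lt_Nm; apply: (@closed_op_action N (K m) m (lam ^ m * c)) => // [|f].
  by rewrite mulf_neq0 // expfz_neq0.
by rewrite omega_K mul_mpolyC scalerA.
Qed.

Lemma closed_op_diff_op N A B :
  closed_op N (diff_op e (- (N.+1)%:R) (- (N.+2)%:R) A B).
Proof.
have shift1 := @closed_op_shift N N.+1 (ltnSn N).
have shift2 := @closed_op_shift N N.+2 (leqW (ltnSn N)).
by apply: closed_op_comp; apply: closed_op_iter; apply: closed_op_sub.
Qed.

Lemma submodule_pure_one w : W w -> w != 0 -> exists2 v, v != 0 & W (t 1 v).
Proof.
move=> Ww w_neq0; have [D [u w_eq]] := tensor_monomial_expansion t_tensor w.
have [N kN] := restricted_killed_seq (codom u) rho_restr.
have [m0 u_m0|u0] := pickP (fun m => u m != 0); last first.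
  case/eqP: w_neq0; rewrite w_eq big1 // => m _.
  by move/negbFE/eqP: (u0 m) => ->; rewrite (bilinear0r t_bil).
(* (B, A) is lexicographically maximal among the exponents (m_Y, m_X) with u m != 0. *)
have [ms u_ms max_ms] :=
  @arg_maxnP _ m0 (fun m => u m != 0) (fun m => m ord_max * D + m ord0)%N u_m0.
set A := ms ord0; set B := ms ord_max.
pose phi := diff_op e (- (N.+1)%:R) (- (N.+2)%:R) A B.
have phi_other m : u m != 0 -> m != ms -> phi 'X_[m] = 0.
  move=> u_m ne_m; have := max_ms m u_m; rewrite mpolyX_pXY.
  have := bmultinom_lt m ord0; have := bmultinom_lt ms ord0; rewrite -/A -/B.
  move=> lt_AD lt_m0D le_F; have [lt_mB|le_Bm] := ltnP (m ord_max) B.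
    exact: diff_op_lt.
  have eq_mB : m ord_max = B by nia.
  rewrite /phi eq_mB diff_op_Xn; last by nia.
  have -> : (m ord0 == A) = false.
    apply: contraNF ne_m => /eqP eq_mA.
    by apply/eqP; apply: val_inj; apply: multinom2_eq.
  by rewrite !mul0r mpolyC0.
pose kappa := (A`! * B`!)%:R * e ^+ A * (- (N.+2)%:R - - (N.+1)%:R) ^+ B : C.
have kappa_neq0 : kappa != 0.
  rewrite !mulf_neq0 ?expf_neq0 ?pnatr_eq0 -?lt0n ?muln_gt0 ?fact_gt0 //.
  by rewrite opprK addrC -opprB -natrB // subSnn oppr_eq0 oner_eq0.
exists (kappa *: u ms); first by rewrite scaler_eq0 negb_or kappa_neq0.
have Wsum : W (\sum_(m : 'X_{1..2 < D}) t 'X_[m] (u m)) by rewrite -w_eq.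
have := @closed_op_diff_op N A B _ _ _ _ (fun m => kN _ (codom_f u m)) Wsum.
rewrite (bigD1 ms) //= big1 ?addr0 => [|m ne_m]; last first.
  have [->|u_m] := eqVneq (u m) 0; first by rewrite (bilinear0r t_bil).
  by rewrite -/phi phi_other // (bilinear0l t_bil).
rewrite mpolyX_pXY diff_op_Xn // eqxx mul1r -/kappa.
by rewrite -[kappa%:MP]mulr1 mul_mpolyC (bilinearZl t_bil) -(bilinearZr t_bil).
Qed.

Lemma submodule_pure_full N v :
  killed_above rho N v -> W (t 1 v) -> forall f, W (t f v).
Proof.
move=> kv W1v f; pose k : int := N.+1.
have lt_Nk : N%:Z < k by rewrite ltz_nat.
have lam_k : lam ^ k != 0 by rewrite expfz_neq0.
refine (@subspace_mpoly_full (fun g => W (t g v)) (- k%:~R) (cL k) (dL k)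
  _ _ W1v _ _ f).
- by rewrite (bilinear0l t_bil).
- by move=> a g h Wg Wh; rewrite (proj1 t_bil); apply: W_lin.
- move=> g; apply: (@closed_op_pure _ (fun g => Xv * shiftXY 0 (- k%:~R) g) _ _ _ kv).
  by apply: (@closed_op_action _ (bH k) k (lam ^ k)); rewrite //= eqxx.
- move=> g; apply: (@closed_op_pure _ (fun g => shiftXY 0 (- k%:~R) g *
    (Yv + (cL k)%:MP * Xv + (dL k)%:MP)) _ _ _ kv).
  by apply: (@closed_op_action _ (bL k) k (lam ^ k)); rewrite //= eqxx.
Qed.

Lemma submodule_full w : W w -> w != 0 -> forall z, W z.
Proof.
move=> Ww w_neq0; have [v v_neq0 W1v] := submodule_pure_one Ww w_neq0.
have [N kv] := rho_restr v.
pose U u := forall f, W (t f u).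
have U_sub : is_submodule rho U.
  split; first by move=> f; rewrite (bilinear0r t_bil).
  split=> [a u1 u2 U1 U2 f|x u Uu f]; first by rewrite (proj2 t_bil); apply: W_lin.
  have -> : t f (rho x u) = act x (t f u) - t (omega x f) u.
    by rewrite act_tensor addrC addKr.
  by apply: (subspaceB W_lin); [apply: W_act | apply: Uu].
have [U0|Uall] := proj2 rho_irr U U_sub.
  by case/eqP: v_neq0; apply: U0; apply: submodule_pure_full kv W1v.
move=> z; have [l ->] := tensor_pure_span t_tensor z.
by apply: (subspace_sum W0 W_lin) => p _; apply: Uall.
Qed.

End Submodule.

Lemma tensor_irreducible : irreducible act.
Proof.
have [[v v_neq0] _] := rho_irr; split.
  by exists (t 1 v); exact: (tensor_neq0 t_tensor (meval1 (fun=> 0)) v_neq0).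
move=> W W_sub; have [[w [Ww w_neq0]]|W0] := pselect (exists w, W w /\ w != 0).
  by right; apply: submodule_full Ww w_neq0.
by left=> w Ww; apply/eqP; apply: contraT => w_neq0; case: W0; exists w.
Qed.
End Irreducibility.

Lemma tensor_reducible (a : C) : (exists v : V, v != 0) ->
  (forall x f, vanishes_on_line a f -> vanishes_on_line a (omega x f)) ->
  ~ irreducible act.
Proof.
move=> [v v_neq0] omega_van [_ act_irr].
(* Contracting with evaluation at (a, 0) kills W, hence 1 (x) v is not in W. *)
pose W z := exists l : seq (CXY * V),
  (forall p, p \in l -> vanishes_on_line a p.1) /\ z = \sum_(p <- l) t p.1 p.2.
have W_pure f u : vanishes_on_line a f -> W (t f u).
  by exists [:: (f, u)]; split=> [p /[1!inE]/eqP -> //|]; rewrite big_seq1.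
have W0 : W 0 by exists [::]; rewrite big_nil.
have W_lin b y z : W y -> W z -> W (b *: y + z).
  move=> [l1 [van1 ->]] [l2 [van2 ->]].
  exists ([seq (b *: p.1, p.2) | p <- l1] ++ l2); split.
    move=> p /[1!mem_cat] /orP[/mapP[q l1_q ->] y'|/van2 //].
    by rewrite mevalZ van1 // mulr0.
  rewrite big_cat big_map scaler_sumr; congr (_ + _).
  by apply: eq_bigr => p _; rewrite (bilinearZl t_bil).
have W_sub : is_submodule act W.
  do 2?split=> //; move=> x z [l [van ->]].
  rewrite (linear_map_sum (proj1 act_mod x)) big_seq.
  apply: (subspace_sum W0 W_lin) => p l_p; rewrite act_tensor.
  by apply: (subspaceD W_lin); apply: W_pure; [apply: omega_van|]; apply: van l_p.
have van_Xa : vanishes_on_line a (Xv - a%:MP).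
  by move=> y; rewrite mevalB mevalC mevalXU subrr.
have [W_triv|W_all] := act_irr W W_sub.
  have := W_triv _ (W_pure _ v van_Xa); apply/eqP.
  apply: (tensor_neq0 t_tensor (phi := meval (point (a + 1) 0))) v_neq0.
  by rewrite /= mevalB mevalC mevalXU /= addrAC subrr add0r.
have [g [g_lin gt]] := tensor_contract t_tensor (meval (point a 0)).
have [l [van t1v]] := W_all (t 1 v).
case/eqP: v_neq0; rewrite -[v]scale1r -(meval1 (point a 0)) -gt t1v.
rewrite (linear_map_sum g_lin) big_seq big1 // => p l_p.
by rewrite gt /= van // scale0r.
Qed.
End TensorModule.

Lemma meval_shiftXY a b f x y :
  (shiftXY a b f).@[point x y] = f.@[point (x + a) (y + b)].
Proof.
rewrite comp_mpoly_meval; apply: meval_eq => i; rewrite (tnth_nth 0).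
by case: i => -[|[|//]] i2 /=; rewrite mevalD mevalC mevalXU.
Qed.

Lemma meval_polyX (s : {poly C}) x y : (Defs.polyX s).@[point x y] = s.[x].
Proof.
rewrite /Defs.polyX raddf_sum /= horner_coef; apply: eq_bigr => i _.
by rewrite mevalM mevalC rmorphXn /= mevalXU.
Qed.

Lemma polyX_C c : c != 0 -> Defs.polyX c%:P = c%:MP.
Proof. by move=> c_neq0; rewrite /Defs.polyX size_polyC c_neq0 big_ord1 coefC mulr1. Qed.

Lemma OmegaI_vanishes lam eta s a : root s a ->
  forall x f, vanishes_on_line a f -> vanishes_on_line a (OmegaI lam eta s x f).
Proof.
move=> sa [m|m|m|m| | |] f fa y; rewrite /= ?meval0 ?mevalZ ?mevalM //.
- by rewrite meval_shiftXY addr0 fa mul0r mulr0.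
- by rewrite meval_shiftXY addr0 fa mulr0 mulr0.
- by rewrite meval_polyX (rootP sa) mul0r mulr0.
Qed.

Lemma OmegaJ_vanishes lam eta s a : root s a ->
  forall x f, vanishes_on_line a f -> vanishes_on_line a (OmegaJ lam eta s x f).
Proof.
move=> sa [m|m|m|m| | |] f fa y; rewrite /= ?meval0 ?mevalZ ?mevalM //.
- by rewrite meval_shiftXY addr0 fa mul0r mulr0.
- by rewrite meval_shiftXY addr0 fa mulr0 mulr0.
- by rewrite meval_polyX (rootP sa) mul0r mulr0.
Qed.

Lemma root_of_nonconstant (s : {poly C}) :
  s != 0 -> ~ nonzero_constant s -> exists a, root s a.
Proof.
move=> s_neq0 s_nonconst; apply/closed_rootP/eqP => size_s1; apply: s_nonconst.
have size_s : (size s <= 1)%N by rewrite size_s1.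
exists s`_0; split; last exact: size1_polyC.
by rewrite -polyC_eq0 -size1_polyC.
Qed.

Section OmegaTensor.
Variables (lam eta : C) (V T : lmodType C) (rho : Gbasis -> V -> V).
Variables (t : CXY -> V -> T) (act : Gbasis -> T -> T).
Hypotheses (lam_neq0 : lam != 0) (rho_restr : restricted rho).
Hypothesis rho_irr : irreducible rho.
Hypotheses (t_tensor : is_tensor t) (act_mod : is_Gmodule act).

Lemma tensor_nonzero_constant (omega : Gbasis -> CXY -> CXY) (s : {poly C}) :
  s != 0 -> (forall a, root s a -> forall x f,
    vanishes_on_line a f -> vanishes_on_line a (omega x f)) ->
  tensor_action omega rho t act -> irreducible act -> nonzero_constant s.
Proof.
move=> s_neq0 omega_van act_tensor act_irr.
apply: contrapT => /(root_of_nonconstant s_neq0) [a sa].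
exact: (tensor_reducible t_tensor act_mod act_tensor (proj1 rho_irr) (omega_van a sa)).
Qed.

Lemma OmegaI_tensor_irreducible c : c != 0 ->
  tensor_action (OmegaI lam eta c%:P) rho t act -> irreducible act.
Proof.
move=> c_neq0 act_tensor.
apply: (tensor_irreducible t_tensor act_mod act_tensor (e := -1) (K := bI)
  (cL := fun m => - m%:~R) (dL := fun m => m%:~R * eta) lam_neq0 c_neq0) => //=.
- by rewrite oppr_eq0 oner_eq0.
- by move=> m f; rewrite polyX_C.
- by move=> m f; rewrite mpolyCN mulNr.
Qed.

Lemma OmegaJ_tensor_irreducible c : c != 0 ->
  tensor_action (OmegaJ lam eta c%:P) rho t act -> irreducible act.
Proof.
move=> c_neq0 act_tensor.
apply: (tensor_irreducible t_tensor act_mod act_tensor (e := 1) (K := bJ)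
  (cL := fun m => m%:~R) (dL := fun m => m%:~R * eta) lam_neq0 c_neq0) => //=.
- by rewrite oner_eq0.
- by move=> m f; rewrite polyX_C.
Qed.
End OmegaTensor.

Theorem theorem4p1 (lam eta : C) (s : {poly C}) (V : lmodType C)
    (rho : Gbasis -> V -> V) :
  lam != 0 -> s != 0 ->
  is_Gmodule rho -> restricted rho -> irreducible rho ->
  (forall (T : lmodType C) (t : CXY -> V -> T) (act : Gbasis -> T -> T),
     is_tensor t -> is_Gmodule act -> tensor_action (OmegaI lam eta s) rho t act ->
     (irreducible act <-> nonzero_constant s)) /\
  (forall (T : lmodType C) (t : CXY -> V -> T) (act : Gbasis -> T -> T),
     is_tensor t -> is_Gmodule act -> tensor_action (OmegaJ lam eta s) rho t act ->
     (irreducible act <-> nonzero_constant s)).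
Proof.
move=> lam_neq0 s_neq0 _ rho_restr rho_irr.
split=> T t act t_tensor act_mod act_tensor; split.
- apply: (tensor_nonzero_constant rho_irr t_tensor act_mod s_neq0 _ act_tensor).
  exact: OmegaI_vanishes.
- by move=> [c [c_neq0 s_c]]; rewrite s_c in act_tensor;
    apply: (OmegaI_tensor_irreducible lam_neq0 rho_restr rho_irr t_tensor act_mod c_neq0).
- apply: (tensor_nonzero_constant rho_irr t_tensor act_mod s_neq0 _ act_tensor).
  exact: OmegaJ_vanishes.
- by move=> [c [c_neq0 s_c]]; rewrite s_c in act_tensor;
    apply: (OmegaJ_tensor_irreducible lam_neq0 rho_restr rho_irr t_tensor act_mod c_neq0).
Qed.
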